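(* A group $G$ admits a nonzero homogeneous quasimorphism if and only if $G$ acts dominatingly on some quasi-total triple $(X,\preceq,T)$ (the action is not required to be effective, and the triple is not required to be complete).
   Context: A homogeneous quasimorphism is $f:G\to\mathbb{R}$ with $\sup_{h,k}|f(hk)-f(h)-f(k)|<\infty$ and $f(h^n)=nf(h)$ for $n\in\mathbb{N}$. For a poset $(X,\preceq)$, an order-preserving bijection $T$ is dominant if for all $a,b\in X$ there is $n\in\mathbb{N}$ with $T^na\succ b$. $(X,\preceq,T)$ is a quasi-total triple if $T$ is a dominant order-preserving bijection of $X$ and there is $N\in\mathbb{N}$ such that for all $a,b\in X$ some $k\in\{0,\dots,N\}$ satisfies $a\preceq T^kb$ or $b\preceq T^ka$. An action of $G$ on $(X,\preceq,T)$ is dominating if $G$ acts by order-preserving bijections commuting with $T$ and there exist $g\in G$, $x\in X$, $n\in\mathbb{N}$ with $g.x\succeq T^n.x$. *)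

From mathcomp Require Import ssreflect ssrfun ssrbool eqtype ssrnat monoid.
From Stdlib Require Import Reals.

Set Implicit Arguments.
Unset Strict Implicit.
Unset Printing Implicit Defensive.

Definition quasimorphism (G : groupType) (f : G -> R) : Prop :=
  exists C : R, forall h k : G,
    (Rabs (f (mul h k) - f h - f k) <= C)%R.

Definition homogeneous_quasimorphism (G : groupType) (f : G -> R) : Prop :=
  quasimorphism f /\
  forall (h : G) (n : nat), (0 < n)%N -> f (natexp h n) = (INR n * f h)%R.

Definition admits_nonzero_hqm (G : groupType) : Prop :=
  exists f : G -> R, homogeneous_quasimorphism f /\ exists g : G, f g <> 0%R.

Definition partial_order (X : Type) (le : X -> X -> Prop) : Prop :=
  (forall a, le a a) /\
  (forall a b, le a b -> le b a -> a = b) /\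
  (forall a b c, le a b -> le b c -> le a c).

Definition sgt (X : Type) (le : X -> X -> Prop) (a b : X) : Prop :=
  le b a /\ a <> b.

Definition order_preserving_bijection (X : Type) (le : X -> X -> Prop)
  (T : X -> X) : Prop :=
  bijective T /\ forall a b, le a b <-> le (T a) (T b).

Definition dominant (X : Type) (le : X -> X -> Prop) (T : X -> X) : Prop :=
  order_preserving_bijection le T /\
  forall a b : X, exists n : nat, (0 < n)%N /\ sgt le (iter n T a) b.

Definition quasi_total_triple (X : Type) (le : X -> X -> Prop) (T : X -> X)
  : Prop :=
  partial_order le /\ dominant le T /\
  exists N : nat, forall a b : X,
    exists k : nat, (k <= N)%N /\ (le a (iter k T b) \/ le b (iter k T a)).

Definition group_action (G : groupType) (X : Type) (act : G -> X -> X) : Prop :=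
  (forall x, act one x = x) /\
  (forall g h x, act (mul g h) x = act g (act h x)).

Definition dominating_action (G : groupType) (X : Type) (le : X -> X -> Prop)
  (T : X -> X) (act : G -> X -> X) : Prop :=
  group_action act /\
  (forall g : G, order_preserving_bijection le (act g)) /\
  (forall (g : G) (x : X), act g (T x) = T (act g x)) /\
  exists (g : G) (x : X) (n : nat), (0 < n)%N /\ le (iter n T x) (act g x).

Definition acts_dominatingly_on_some_qtt (G : groupType) : Prop :=
  exists (X : Type) (le : X -> X -> Prop) (T : X -> X) (act : G -> X -> X),
    quasi_total_triple le T /\ dominating_action le T act.

(* A nonzero homogeneous quasimorphism f with defect C orders G x Z by
   (g, m) <= (h, n) iff they are equal or f(g^-1 h) + (n - m)(C + 1) >= C + 1:
   shifting the Z-coordinate is dominant, quasi-totality holds with N = 1, and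
   left multiplication by any g with f g >= 2(C + 1) dominates.
   Conversely, given a dominating action on a quasi-total triple, the
   translation number tr(x, y) = max {p - q | T^p x <= T^q y} is superadditive
   and, by quasi-totality, tr(x, y) + tr(y, x) is bounded below.  Hence
   a(g) = tr(x0, g x0) is superadditive with bounded defect, its homogenization
   sup_n a(g^n)/n is a homogeneous quasimorphism above a, and a(g) >= 1 for the
   dominating g. *)

From Stdlib Require Import Reals Lra Lia ZArith ClassicalEpsilon Classical.
From mathcomp Require Import ssreflect ssrfun ssrbool eqtype ssrnat monoid.
From mathcomp Require Import zify.

Lemma Z_bounded_max (P : Z -> Prop) n0 B :
  P n0 -> (forall n, P n -> (n < B)%Z) ->
  exists m, P m /\ forall n, P n -> (n <= m)%Z.
Proof.
move=> Pn0 P_lt_B.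
suff: forall k n0, P n0 -> (Z.to_nat (B - n0) <= k)%coq_nat ->
  exists m, P m /\ forall n, P n -> (n <= m)%Z by move/(_ _ n0 Pn0); apply.
elim=> [|k IHk] n1 Pn1 dist_le_k; first by have := P_lt_B _ Pn1; lia.
case: (classic (exists n, P n /\ (n1 < n)%Z)) => [[n [Pn lt_n1n]]|no_larger].
  by apply: (IHk n Pn); have := P_lt_B _ Pn; lia.
exists n1; split=> // n Pn; apply/Z.nlt_ge => lt_n1n; apply: no_larger; by exists n.
Qed.

Section TranslationNumber.
Context {X : Type} {le : X -> X -> Prop} {T : X -> X}.
Hypothesis qtt : quasi_total_triple le T.

Lemma qtt_refl a : le a a.
Proof. by case: qtt => -[]. Qed.

Lemma qtt_antisym a b : le a b -> le b a -> a = b.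
Proof. by case: qtt => -[_ [antisym _]] _; apply: antisym. Qed.

Lemma qtt_trans a b c : le a b -> le b c -> le a c.
Proof. by case: qtt => -[_ [_ trans]] _; apply: trans. Qed.

Lemma iterT_le k a b : le (iter k T a) (iter k T b) <-> le a b.
Proof.
have [_ [[[_ T_le] _] _]] := qtt.
elim: k => [//|k IHk] /=; rewrite -T_le; exact: IHk.
Qed.

Lemma iterT_inj k : injective (iter k T).
Proof.
have [_ [[[T_bij _] _] _]] := qtt.
elim: k => [//|k IHk] a b /= /(bij_inj T_bij); exact: IHk.
Qed.

Lemma le_iterT_mul z m k : le z (iter m T z) -> le z (iter (m * k) T z).
Proof.
move=> le_z_Tmz; elim: k => [|k IHk]; first by rewrite muln0; exact: qtt_refl.
by rewrite mulnS iterD; apply: qtt_trans le_z_Tmz _; apply/iterT_le.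
Qed.

Lemma iterT_mul_le z m k : le (iter m T z) z -> le (iter (m * k) T z) z.
Proof.
move=> le_Tmz_z; elim: k => [|k IHk]; first by rewrite muln0; exact: qtt_refl.
by rewrite mulnS iterD; apply: qtt_trans _ le_Tmz_z; apply/iterT_le.
Qed.

(* Dominance gives z < T^m z; if also T^d z <= z with d > 0, then
   T^(md) z = z, and z < T^m z <= T^(md) z = z is impossible. *)
Lemma iterT_le_self_eq0 d z : le (iter d T z) z -> d = 0.
Proof.
case: d => [//|d] le_Tdz_z.
have [_ [[_ dom] _]] := qtt; have [m [_ [le_z_Tmz neq_Tmz_z]]] := dom z z.
have Tmdz : iter (m * d.+1) T z = z.
  apply: qtt_antisym; last exact: le_iterT_mul.
  by rewrite mulnC; apply: iterT_mul_le.
exfalso; apply: neq_Tmz_z; apply: qtt_antisym => //.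
by rewrite -{2}Tmdz mulnS iterD; apply/iterT_le/le_iterT_mul.
Qed.

Definition shifted_le (n : Z) x y := exists p q : nat,
  n = (Z.of_nat p - Z.of_nat q)%Z /\ le (iter p T x) (iter q T y).

Lemma shifted_le_trans m n x y z :
  shifted_le m x y -> shifted_le n y z -> shifted_le (m + n) x z.
Proof.
move=> [p [q [-> le_xy]]] [p' [q' [-> le_yz]]].
exists (p' + p), (q + q'); split; first lia.
apply: (@qtt_trans _ (iter (p' + q) T y)); first by rewrite !iterD iterT_le.
by rewrite addnC !iterD iterT_le.
Qed.

Lemma shifted_le_exists x y : exists n, shifted_le n x y.
Proof.
have [_ [[_ dom] _]] := qtt; have [m [_ [le_x_Tmy _]]] := dom y x.
by exists (- Z.of_nat m)%Z, 0, m; split=> //; lia.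
Qed.

Lemma shifted_le_bounded x y : exists B, forall n, shifted_le n x y -> (n < B)%Z.
Proof.
have [_ [[_ dom] _]] := qtt; have [m [_ [le_y_Tmx neq_Tmx_y]]] := dom x y.
exists (Z.of_nat m) => n [p [q [-> le_Tpx_Tqy]]].
apply/Z.nle_gt => le_mn.
have le_Tpx_Tqmx : le (iter p T x) (iter (q + m) T x).
  by rewrite iterD; apply: qtt_trans le_Tpx_Tqy _; apply/iterT_le.
have Ep : p = (p - (q + m)) + (q + m) by rewrite subnK //; lia.
move: le_Tpx_Tqmx; rewrite {1}Ep iterD => /iterT_le_self_eq0 d0.
rewrite d0 add0n in Ep.
apply: neq_Tmx_y; apply: (@iterT_inj q); apply: qtt_antisym.
  by rewrite -iterD -Ep.
exact/iterT_le.
Qed.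

Lemma translation_exists x y :
  exists m, shifted_le m x y /\ forall n, shifted_le n x y -> (n <= m)%Z.
Proof.
have [n0 shifted_n0] := shifted_le_exists x y.
have [B shifted_lt_B] := shifted_le_bounded x y.
exact: Z_bounded_max shifted_n0 shifted_lt_B.
Qed.

Definition translation x y : Z :=
  epsilon (inhabits 0%Z)
    (fun m => shifted_le m x y /\ forall n, shifted_le n x y -> (n <= m)%Z).

Lemma translation_shifted_le x y : shifted_le (translation x y) x y.
Proof. exact: (proj1 (epsilon_spec _ _ (translation_exists x y))). Qed.

Lemma translation_max n x y : shifted_le n x y -> (n <= translation x y)%Z.
Proof. exact: (proj2 (epsilon_spec _ _ (translation_exists x y))). Qed.

Lemma translation_superadditive x y z :
  (translation x y + translation y z <= translation x z)%Z.
Proof. by apply/translation_max/shifted_le_trans; apply: translation_shifted_le. Qed.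

(* Compare T^q z with T^(p + N + 1) y, where T^p y <= T^q z realises
   translation y z: quasi-totality either bounds translation z y from below,
   or beats the maximality of translation y z. *)
Lemma translation_antisymmetric_bound :
  exists K, forall y z, (- K <= translation y z + translation z y)%Z.
Proof.
have [_ [_ [N quasi_total]]] := qtt; exists (2 * Z.of_nat N + 1)%Z => y z.
have [p [q [Eyz le_Tpy_Tqz]]] := translation_shifted_le y z.
have [k [/leP le_kN [le_zy | le_yz]]] :=
  quasi_total (iter q T z) (iter (p + N.+1) T y).
- have : shifted_le (Z.of_nat q - Z.of_nat (k + (p + N.+1)))%Z z y.
    by exists q, (k + (p + N.+1)); rewrite iterD.
  move/translation_max; lia.
- have : shifted_le (Z.of_nat (p + N.+1) - Z.of_nat (k + q))%Z y z.
    by exists (p + N.+1), (k + q); rewrite (iterD k).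
  move/translation_max; lia.
Qed.

Section Action.
Context {G : groupType} {act : G -> X -> X}.
Hypothesis dom_act : dominating_action le T act.

Lemma act_iterT g n x : act g (iter n T x) = iter n T (act g x).
Proof.
have [_ [_ [act_T _]]] := dom_act.
by elim: n => [//|n IHn] /=; rewrite act_T IHn.
Qed.

Lemma shifted_le_act g n x y :
  shifted_le n (act g x) (act g y) <-> shifted_le n x y.
Proof.
have [_ [act_le _]] := dom_act; have [_ act_g_le] := act_le g.
split=> -[p [q [En le_pq]]]; exists p, q; split=> //; move: le_pq;
  by rewrite -!act_iterT -act_g_le.
Qed.

Lemma translation_act g x y : translation (act g x) (act g y) = translation x y.
Proof.
apply: Z.le_antisymm; apply: translation_max.
  by rewrite -(shifted_le_act g); apply: translation_shifted_le.
by apply/shifted_le_act; apply: translation_shifted_le.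
Qed.

Lemma orbit_translation_superadditive x g h :
  (translation x (act g x) + translation x (act h x)
     <= translation x (act (mul g h) x))%Z.
Proof.
have [[_ act_mul] _] := dom_act.
rewrite -(translation_act g x (act h x)) act_mul; exact: translation_superadditive.
Qed.

Lemma orbit_translation_defect : exists K, forall x g h,
  (translation x (act (mul g h) x)
     <= translation x (act g x) + translation x (act h x) + K)%Z.
Proof.
have [[_ act_mul] _] := dom_act.
have [K antisym_bound] := translation_antisymmetric_bound; exists K => x g h.
rewrite -(translation_act g x (act h x)) act_mul.
have := translation_superadditive x (act g (act h x)) (act g x).
have := antisym_bound (act g x) (act g (act h x)); lia.
Qed.

End Action.
End TranslationNumber.

Arguments translation {X} le T x y.

Local Open Scope R_scope.

Definition growth_ratios (u : nat -> R) (r : R) : Prop :=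
  exists n : nat, r = u n.+1 / INR n.+1.

(* sup_n u(n)/n over n >= 1; an unspecified value when the ratios are unbounded. *)
Definition growth (u : nat -> R) : R :=
  epsilon (inhabits 0) (is_lub (growth_ratios u)).

Lemma INR_succ_gt0 n : 0 < INR n.+1.
Proof. by apply: lt_0_INR; lia. Qed.

Lemma le_Rdiv_iff x y c : 0 < c -> y <= x / c <-> y * c <= x.
Proof.
move=> c_gt0; have cancel_c : x / c * c = x by field; lra.
split=> [le_y_xc | le_yc_x]; first by rewrite -cancel_c; apply: Rmult_le_compat_r; lra.
by apply: (Rmult_le_reg_r c); rewrite ?cancel_c.
Qed.

Lemma Rdiv_le_iff x y c : 0 < c -> x / c <= y <-> x <= y * c.
Proof.
move=> c_gt0; have cancel_c : x / c * c = x by field; lra.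
split=> [le_xc_y | le_x_yc]; first by rewrite -cancel_c; apply: Rmult_le_compat_r; lra.
by apply: (Rmult_le_reg_r c); rewrite ?cancel_c.
Qed.

Section Growth.
Variables (u : nat -> R) (c : R).
Hypothesis u_le : forall n, u n.+1 <= INR n.+1 * c.

Lemma growth_is_lub : is_lub (growth_ratios u) (growth u).
Proof.
have bounded : bound (growth_ratios u).
  exists c => _ [n ->].
  by rewrite (Rdiv_le_iff _ _ _ (INR_succ_gt0 n)) Rmult_comm; exact: u_le.
have nonempty : exists r, growth_ratios u r by exists (u 1 / INR 1), 0%N.
have [l l_lub] := completeness _ bounded nonempty.
by apply: epsilon_spec; exists l.
Qed.

Lemma growth_ratio_le n : u n.+1 / INR n.+1 <= growth u.
Proof. by have [ub _] := growth_is_lub; apply: ub; exists n. Qed.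

Lemma growth_le : growth u <= c.
Proof.
have [_ least] := growth_is_lub; apply: least => _ [n ->].
by rewrite (Rdiv_le_iff _ _ _ (INR_succ_gt0 n)) Rmult_comm; exact: u_le.
Qed.

End Growth.

Section SuperadditiveGrowth.
Variables (u : nat -> R) (c : R).
Hypotheses (u_superadditive : forall m n, u m + u n <= u (m + n))
  (u_le : forall n, u n.+1 <= INR n.+1 * c).

Lemma superadditive_mul k n : INR k.+1 * u n <= u (k.+1 * n).
Proof.
elim: k => [|k IHk]; first by rewrite mul1n /=; lra.
rewrite mulSn S_INR; have := u_superadditive n (k.+1 * n); lra.
Qed.

Lemma growth_subsequence k (v : nat -> R) :
  (forall n, v n = u (k.+1 * n)) -> growth v = INR k.+1 * growth u.
Proof.
move=> vE; have k_gt0 := INR_succ_gt0 k.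
have kn_succ n : (k.+1 * n.+1 = (k * n.+1 + n).+1)%N by lia.
have INR_kn n : INR (k.+1 * n.+1) = INR k.+1 * INR n.+1 := mult_INR _ _.
have v_le n : v n.+1 <= INR n.+1 * (INR k.+1 * c).
  have := u_le (k * n.+1 + n); rewrite vE -kn_succ INR_kn; lra.
apply: (is_lub_u (growth_ratios v)); first exact: growth_is_lub _ _ v_le.
split.
- move=> _ [n ->]; rewrite vE.
  have := growth_ratio_le _ _ u_le (k * n.+1 + n); rewrite -kn_succ INR_kn.
  have n_gt0 := INR_succ_gt0 n.
  have -> : u (k.+1 * n.+1) / INR n.+1
          = INR k.+1 * (u (k.+1 * n.+1) / (INR k.+1 * INR n.+1)).
    by field; split; lra.
  by move=> ratio_le; apply: Rmult_le_compat_l; lra.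
- move=> M M_ub; rewrite Rmult_comm -le_Rdiv_iff //.
  have [_ least] := growth_is_lub _ _ u_le; apply: least => _ [n ->].
  rewrite le_Rdiv_iff //; apply: Rle_trans (M_ub _ (ex_intro _ n erefl)).
  rewrite vE /Rdiv; have := superadditive_mul k n.+1.
  have := Rinv_0_lt_compat _ (INR_succ_gt0 n).
  move: (/ INR n.+1) => i; nra.
Qed.

End SuperadditiveGrowth.

Section Homogenization.
Context {G : groupType} (a : G -> R) {K : R}.
Hypotheses (a_superadditive : forall g h, a g + a h <= a (mul g h))
  (a_defect : forall g h, a (mul g h) <= a g + a h + K).

Definition homogenization (g : G) : R := growth (fun n => a (natexp g n)).

Lemma superadditive_defect_ge0 : 0 <= K.
Proof.
by have := a_superadditive one one; have := a_defect one one; rewrite mulg1; lra.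
Qed.

Lemma powers_superadditive g m n :
  a (natexp g m) + a (natexp g n) <= a (natexp g (m + n)).
Proof. by rewrite expgnDr. Qed.

Lemma powers_le g n : a (natexp g n.+1) <= INR n.+1 * (a g + K).
Proof.
elim: n => [|n IHn].
  by rewrite expg1 /=; have := superadditive_defect_ge0; lra.
rewrite expgS S_INR; have := a_defect g (natexp g n.+1).
(* [expgS] and [a_defect] build these terms over different structure instances;
   generalizing them makes them syntactically equal atoms for lra. *)
by move: (a (mul g _)) (a (natexp g n.+1)) IHn => agn an; lra.
Qed.

Lemma le_homogenization g : a g <= homogenization g.
Proof.
have := growth_ratio_le (fun n => a (natexp g n)) _ (powers_le g) 0.
by rewrite expg1 /= Rdiv_1_r.
Qed.

Lemma homogenization_le g : homogenization g <= a g + K.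
Proof. exact: growth_le (powers_le g). Qed.

Lemma homogenization_natexp g k :
  (0 < k)%N -> homogenization (natexp g k) = INR k * homogenization g.
Proof.
case: k => [//|k] _.
apply: (growth_subsequence _ _ (powers_superadditive g) (powers_le g)) => n.
by rewrite expgnA.
Qed.

Lemma homogenization_hqm : homogeneous_quasimorphism homogenization.
Proof.
split; last exact: homogenization_natexp.
exists (2 * K) => g h; apply: Rabs_le.
have := le_homogenization g; have := le_homogenization h.
have := le_homogenization (mul g h); have := homogenization_le g.
have := homogenization_le h; have := homogenization_le (mul g h).
have := a_superadditive g h; have := a_defect g h; lra.
Qed.

End Homogenization.

Lemma Rabs_le_between x c : Rabs x <= c -> - c <= x <= c.
Proof. by have := Rle_abs x; have := Rle_abs (- x); rewrite Rabs_Ropp; lra. Qed.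

Lemma bounded_multiples_eq0 t C : (forall n, Rabs (INR n * t) <= C) -> t = 0.
Proof.
move=> bounded; apply: NNPP => t_neq0.
have [n n_large] := INR_archimed (Rabs t) C (Rabs_pos_lt _ t_neq0).
by have := bounded n; rewrite Rabs_mult Rabs_pos_eq; [lra | apply: pos_INR].
Qed.

Section HomogeneousQuasimorphism.
Context {G : groupType} {f : G -> R} {C : R}.
Hypotheses (f_defect : forall h k, Rabs (f (mul h k) - f h - f k) <= C)
  (f_natexp : forall h n, (0 < n)%N -> f (natexp h n) = INR n * f h).

Lemma hqm_defect_ge0 : 0 <= C.
Proof. exact: Rle_trans (Rabs_pos _) (f_defect one one). Qed.

Lemma hqm_one : f one = 0.
Proof.
by have := f_natexp one 2 erefl; rewrite expg1n; move: (f one) => f1 /=; lra.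
Qed.

(* f(g^n) + f(g^-n) = n (f g + f g^-1) stays within the defect of f(1) = 0. *)
Lemma hqm_inv g : f (inv g) = - f g.
Proof.
suff: f g + f (inv g) = 0 by lra.
apply: (@bounded_multiples_eq0 _ C) => -[|n].
  by rewrite Rmult_0_l Rabs_R0; exact: hqm_defect_ge0.
have cancel : mul (natexp g n.+1) (natexp (inv g) n.+1) = one.
  by rewrite expVgn mulgV.
have := f_defect (natexp g n.+1) (natexp (inv g) n.+1).
rewrite cancel hqm_one !f_natexp // -Rabs_Ropp.
by congr (Rabs _ <= _); ring.
Qed.

Lemma hqm_unbounded g0 M : f g0 <> 0 -> exists g, M <= f g.
Proof.
move=> fg0_neq0; have [g fg_gt0] : exists g, 0 < f g.
  case: (Rlt_le_dec 0 (f g0)) => [|fg0_le0]; first by exists g0.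
  by exists (inv g0); rewrite hqm_inv; lra.
have [p p_large] := INR_archimed (f g) M fg_gt0.
by exists (natexp g p.+1); rewrite f_natexp // S_INR; lra.
Qed.
End HomogeneousQuasimorphism.

Section QuasimorphismOrder.
Context {G : groupType} (f : G -> R) (C : R).
Hypotheses (f_defect : forall h k, Rabs (f (mul h k) - f h - f k) <= C)
  (f_natexp : forall h n, (0 < n)%N -> f (natexp h n) = INR n * f h).

Let D := C + 1.

Let D_gt0 : 0 < D.
Proof. have := hqm_defect_ge0 f_defect; rewrite /D; lra. Qed.

(* The gap is antisymmetric and additive up to C, so requiring gap >= D > C
   yields a transitive, antisymmetric relation. *)
Definition qm_gap (x y : G * Z) : R :=
  f (mul (inv x.1) y.1) + IZR (y.2 - x.2) * D.

Definition qm_le (x y : G * Z) : Prop := x = y \/ D <= qm_gap x y.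

Definition shiftZ (x : G * Z) : G * Z := (x.1, (x.2 + 1)%Z).

Definition left_mul (g : G) (x : G * Z) : G * Z := (mul g x.1, x.2).

Lemma qm_gap_antisym x y : qm_gap y x = - qm_gap x y.
Proof.
rewrite /qm_gap.
have -> : mul (inv y.1) x.1 = inv (mul (inv x.1) y.1) by rewrite invgM invgK.
rewrite (hqm_inv f_defect f_natexp).
have -> : IZR (x.2 - y.2) = - IZR (y.2 - x.2) by rewrite -opp_IZR; f_equal; lia.
ring.
Qed.

Lemma qm_gap_refl x : qm_gap x x = 0.
Proof.
by rewrite /qm_gap mulVg (hqm_one f_natexp) Z.sub_diag Rmult_0_l Rplus_0_l.
Qed.

Lemma qm_gap_triangle x y z : qm_gap x y + qm_gap y z - C <= qm_gap x z.
Proof.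
have split_xz : mul (inv x.1) z.1 = mul (mul (inv x.1) y.1) (mul (inv y.1) z.1).
  by rewrite -mulgA (mulgA y.1) mulgV mul1g.
have split_Z : IZR (z.2 - x.2) = IZR (y.2 - x.2) + IZR (z.2 - y.2).
  by rewrite -plus_IZR; f_equal; lia.
have := Rabs_le_between _ _ (f_defect (mul (inv x.1) y.1) (mul (inv y.1) z.1)).
rewrite /qm_gap split_xz split_Z.
by move: (f (mul (mul _ _) _)) (f (mul (inv x.1) y.1)) (f (mul (inv y.1) z.1));
  move=> ? ? ?; lra.
Qed.

Lemma iter_shiftZ n x : iter n shiftZ x = (x.1, (x.2 + Z.of_nat n)%Z).
Proof.
elim: n => [|n IHn] /=; first by rewrite Z.add_0_r; case: x.
by rewrite IHn /shiftZ /=; f_equal; lia.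
Qed.

Lemma qm_gap_iter_shiftZ n x y :
  qm_gap x (iter n shiftZ y) = qm_gap x y + INR n * D.
Proof.
rewrite iter_shiftZ /qm_gap /=.
have -> : IZR (y.2 + Z.of_nat n - x.2) = IZR (y.2 - x.2) + INR n.
  by rewrite INR_IZR_INZ -plus_IZR; f_equal; lia.
ring.
Qed.

Lemma qm_gap_shiftZ x y : qm_gap (shiftZ x) (shiftZ y) = qm_gap x y.
Proof.
by rewrite /qm_gap /shiftZ /=; have -> : (y.2 + 1 - (x.2 + 1) = y.2 - x.2)%Z by lia.
Qed.

Lemma qm_gap_left_mul g x y : qm_gap (left_mul g x) (left_mul g y) = qm_gap x y.
Proof. by rewrite /qm_gap /left_mul /= invgM -mulgA mulKg. Qed.

Lemma shiftZ_bij : bijective shiftZ.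
Proof.
by exists (fun x : G * Z => (x.1, (x.2 - 1)%Z)) => -[g m];
  rewrite /shiftZ /=; f_equal; lia.
Qed.

Lemma left_mul_bij g : bijective (left_mul g).
Proof. by exists (left_mul (inv g)) => -[h m]; rewrite /left_mul /= ?mulKg ?mulVKg. Qed.

Lemma gap_isometry_order_preserving (F : G * Z -> G * Z) : bijective F ->
  (forall x y, qm_gap (F x) (F y) = qm_gap x y) ->
  order_preserving_bijection qm_le F.
Proof.
move=> F_bij F_gap; split=> // x y; rewrite /qm_le F_gap.
split=> -[eq_xy | le_xy]; [by left; rewrite eq_xy | by right | left | by right].
exact: (bij_inj F_bij eq_xy).
Qed.

Lemma qm_le_partial_order : partial_order qm_le.
Proof.
have C_ge0 := hqm_defect_ge0 f_defect.
split; [by left | split].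
- move=> x y [-> | le_xy] // [-> | le_yx] //.
  by rewrite qm_gap_antisym in le_yx; lra.
- move=> x y z [-> | le_xy] // [<- | le_yz]; [by right | right].
  by have := qm_gap_triangle x y z; rewrite /D in le_xy le_yz *; lra.
Qed.

Lemma qm_le_dominant : dominant qm_le shiftZ.
Proof.
split; first exact: gap_isometry_order_preserving shiftZ_bij qm_gap_shiftZ.
move=> x y; have [n n_large] := INR_archimed D (D - qm_gap y x) D_gt0.
have le_y_x' : D <= qm_gap y (iter n.+1 shiftZ x).
  by rewrite qm_gap_iter_shiftZ S_INR; lra.
exists n.+1; split=> //; split; first by right.
by move=> eq_xy; rewrite eq_xy qm_gap_refl in le_y_x'; lra.
Qed.

(* Quasi-totality holds with N = 1: the sign of qm_gap x y decides which of
   x <= T y, y <= T x holds. *)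
Lemma qm_le_quasi_total_triple : quasi_total_triple qm_le shiftZ.
Proof.
split; first exact: qm_le_partial_order.
split; first exact: qm_le_dominant.
exists 1%N => x y; exists 1%N; split=> //.
have := qm_gap_iter_shiftZ 1 x y; have := qm_gap_iter_shiftZ 1 y x.
rewrite /= Rmult_1_l (qm_gap_antisym x y) => gap_y_Tx gap_x_Ty.
case: (Rle_dec 0 (qm_gap x y)) => [gap_ge0 | gap_lt0]; [left | right]; right; lra.
Qed.

Lemma qm_le_dominating_action g0 :
  f g0 <> 0 -> dominating_action qm_le shiftZ left_mul.
Proof.
move=> fg0_neq0; split; [split | split; [|split]].
- by move=> -[g m]; rewrite /left_mul mul1g.
- by move=> g h [k m]; rewrite /left_mul /= mulgA.
- move=> g.
  exact: gap_isometry_order_preserving (left_mul_bij g) (qm_gap_left_mul g).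
- by [].
- have [g fg_large] := hqm_unbounded f_defect f_natexp _ (2 * D) fg0_neq0.
  exists g, (one, 0%Z), 1%N; split=> //; right.
  by rewrite /qm_gap /left_mul /= invg1 mul1g mulg1; lra.
Qed.

End QuasimorphismOrder.

Lemma hqm_acts_dominatingly (G : groupType) :
  admits_nonzero_hqm G -> acts_dominatingly_on_some_qtt G.
Proof.
move=> [f [[[C f_defect] f_natexp] [g0 fg0_neq0]]].
exists (G * Z)%type, (qm_le f C), shiftZ, left_mul; split.
- exact: qm_le_quasi_total_triple f_defect f_natexp.
- exact: qm_le_dominating_action f_defect f_natexp g0 fg0_neq0.
Qed.

Lemma acts_dominatingly_hqm (G : groupType) :
  acts_dominatingly_on_some_qtt G -> admits_nonzero_hqm G.
Proof.
move=> [X [le [T [act [qtt dom_act]]]]].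
have [_ [_ [_ [g0 [x0 [n0 [n0_gt0 le_Tx0_g0x0]]]]]]] := dom_act.
pose a g := IZR (translation le T x0 (act g x0)).
have [K a_defectZ] := orbit_translation_defect qtt dom_act.
have a_superadditive g h : a g + a h <= a (mul g h).
  by rewrite /a -plus_IZR; apply/IZR_le/orbit_translation_superadditive.
have a_defect g h : a (mul g h) <= a g + a h + IZR K.
  by rewrite /a -!plus_IZR; apply/IZR_le/a_defectZ.
exists (homogenization a); split; first exact: homogenization_hqm.
exists g0.
have a_g0 : 1 <= a g0.
  rewrite /a; apply: IZR_le; apply: (Z.le_trans _ (Z.of_nat n0)); first lia.
  by apply: (translation_max qtt); exists n0, 0%N; split=> //; lia.
by have := le_homogenization a a_superadditive a_defect g0; lra.
Qed.

Theorem corollary1p9 (G : groupType) :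
  admits_nonzero_hqm G <-> acts_dominatingly_on_some_qtt G.
Proof. by split; [apply: hqm_acts_dominatingly | apply: acts_dominatingly_hqm]. Qed.
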